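(* Suppose the event $\xi_n$ occurs, let $t\in\{K+1,\dots,n\}$, and let $A_t$ be the action taken by the algorithm in round $t$. Then $$\mu(a^* )-\mu(A_t)\le 2c_t(A_t)+2c_t(a^* ).$$
   Context: $K$-armed bandit: actions $a\in[K]$ with unknown mean rewards $\mu(a)$; optimal action $a^*=\arg\max_a\mu(a)$. In each round the learner takes $A_t$ and observes reward $Y_t$ with mean $\mu(A_t)$. Notation: $T_t(a)=\sum_{s=1}^{t-1}\mathbb{1}\{A_s=a\}$; $\hat\mu_t(a)=T_t(a)^{-1}\sum_{s=1}^{t-1}\mathbb{1}\{A_s=a\}Y_s$; for fixed $\delta\in(0,1)$, $c_t(a)=\sqrt{2\log(1/\delta)/T_t(a)}$; $U_t(a)=\hat\mu_t(a)+c_t(a)$, $L_t(a)=\hat\mu_t(a)-c_t(a)$. Algorithm: in rounds $1,\dots,K$ take each action once; in each round $t\ge K+1$ take $A_t\in\arg\max_{a\in\tilde A_t}1/T_t(a)$ where $\tilde A_t=\{a\in[K]:U_t(a)\ge\max_{a'\in[K]}L_t(a')\}$ (ties broken arbitrarily). Event $\xi_n=\bigcap_{a\in[K]}\bigcap_{t=K+1}^n\{|\hat\mu_t(a)-\mu(a)|\le c_t(a)\}$. *)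

From mathcomp Require Import all_boot all_order all_algebra.
From mathcomp Require Import all_classical all_reals all_analysis.
Set Implicit Arguments. Unset Strict Implicit. Unset Printing Implicit Defensive.
Import Order.TTheory GRing.Theory Num.Theory.
Local Open Scope ring_scope.

(* Rounds are indexed by t = 1, 2, ...; [A t : 'I_K] is the action taken in
   round t and [Y t] the observed reward in round t. *)
Section Bandit.
Variables (R : realType) (K : nat) (A : nat -> 'I_K) (Y : nat -> R) (delta : R).

Definition Tcount (t : nat) (a : 'I_K) : nat :=
  (\sum_(1 <= s < t) (A s == a))%N.

Definition muhat (t : nat) (a : 'I_K) : R :=
  (Tcount t a)%:R^-1 * \sum_(1 <= s < t) ((A s == a)%:R * Y s).

Definition conf (t : nat) (a : 'I_K) : R :=
  Num.sqrt (2 * ln (1 / delta) / (Tcount t a)%:R).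

Definition Ucb (t : nat) (a : 'I_K) : R := muhat t a + conf t a.
Definition Lcb (t : nat) (a : 'I_K) : R := muhat t a - conf t a.

Definition in_tildeA (t : nat) (a : 'I_K) : Prop :=
  forall a' : 'I_K, Lcb t a' <= Ucb t a.

Definition algorithm_run : Prop :=
  (forall a : 'I_K, Tcount K.+1 a = 1%N) /\
  (forall t : nat, (K.+1 <= t)%N ->
     in_tildeA t (A t) /\
     forall a : 'I_K, in_tildeA t a -> (Tcount t a)%:R^-1 <= (Tcount t (A t))%:R^-1 :> R).

Definition xi (mu : 'I_K -> R) (n : nat) : Prop :=
  forall (a : 'I_K) (t : nat), (K.+1 <= t <= n)%N -> `|muhat t a - mu a| <= conf t a.

End Bandit.

(* On the good event every confidence interval contains its mean, and the
   algorithm only plays actions whose interval meets the best lower bound; in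
   particular the interval of A_t reaches up to L_t(astar).  Chaining
   mu(astar) <= L_t(astar) + 2 c_t(astar) <= U_t(A_t) + 2 c_t(astar) <= mu(A_t) + 2 c_t(A_t) + 2 c_t(astar)
   gives the bound. *)
From mathcomp Require Import all_boot all_order all_algebra.
From mathcomp Require Import all_classical all_reals all_analysis.
From mathcomp Require Import lra.
Import Order.TTheory GRing.Theory Num.Theory.
Local Open Scope ring_scope.

Lemma overlapping_intervals_mean_gap (R : realDomainType) (m1 m2 c1 c2 u1 u2 : R) :
  `|m1 - u1| <= c1 -> `|m2 - u2| <= c2 -> m1 - c1 <= m2 + c2 ->
  u1 - u2 <= 2 * c2 + 2 * c1.
Proof.
rewrite !ler_norml => /andP[lo1 hi1] /andP[lo2 hi2] overlap.
lra.
Qed.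

Lemma algorithm_run_played_in_tildeA (R : realType) (K : nat) (A : nat -> 'I_K)
  (Y : nat -> R) (delta : R) (t : nat) :
  algorithm_run A Y delta -> (K.+1 <= t)%N -> in_tildeA A Y delta t (A t).
Proof. by move=> [_ run] /run []. Qed.

Theorem lemma2 (R : realType) (K : nat) (mu : 'I_K -> R) (astar : 'I_K)
  (A : nat -> 'I_K) (Y : nat -> R) (delta : R) (n t : nat) :
  0 < delta < 1 ->
  (forall a : 'I_K, mu a <= mu astar) ->
  algorithm_run A Y delta ->
  xi A Y delta mu n ->
  (K.+1 <= t <= n)%N ->
  mu astar - mu (A t) <= 2 * conf A delta t (A t) + 2 * conf A delta t astar.
Proof.
move=> _ _ run good t_range.
have /andP[Kt _] := t_range.
apply: overlapping_intervals_mean_gap (good astar t t_range) (good (A t) t t_range) _.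
exact: algorithm_run_played_in_tildeA run Kt astar.
Qed.
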